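(* Consider the weak interface treatment below for the transformed two-phase evaporation problem, with the outer boundary terms ignored. Let the penalty coefficients be chosen as follows: if $(a_v)_\delta < 0$: $\sigma_v^1=\beta_v (a_v)_\delta$, $\sigma_l^1=0$, $\sigma_v^2=\sigma_l^2=-\sigma/2 \leq 0$, $\sigma_v^3 = -k_v J_v^{-1}$, $\sigma_l^3 = k_l J_l^{-1}$; if $(a_v)_\delta > 0$: $\sigma_v^1=0$, $\sigma_l^1=-\beta_l (a_l)_\delta$, $\sigma_v^2=\sigma_l^2=-\sigma/2 \leq 0$, $\sigma_v^3 = -k_v J_v^{-1}$, $\sigma_l^3 = k_l J_l^{-1}$; if $(a_v)_\delta=0$: $\sigma_v^1=\sigma_l^1=0$ (other coefficients as before). Then the weakly imposed formulation is energy bounded, i.e. applying the energy method (multiplying each equation by its solution, integrating over its domain and adding) gives an energy rate whose interface contributions are either dissipative or bounded, so time integration of the energy rate yields an energy bound.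
   Context: Transformed (steady-frame) problem: for $\xi\in[\xi_0,\delta]$ (vapour) and $\eta\in[\delta,\eta_n]$ (liquid), $\beta_v((J_v T_v)_\tau + (a_v T_v)_\xi) = k_v (J_v^{-1} T_{v,\xi})_\xi$, $\beta_l((J_l T_l)_\tau + (a_l T_l)_\eta) = k_l (J_l^{-1} T_{l,\eta})_\eta$, with interface condition $T_v=T_l=T_\delta$ at the interface $\delta$, where $T_\delta$ is an externally given evaporation temperature. Here $\beta=\rho C_p$ (density times specific heat), $k_v,k_l>0$ scaled heat conduction coefficients, $J_v,J_l>0$ Jacobians of the moving-to-fixed coordinate transformations, and $a_v=u_v-\tilde u_v$, $a_l=u_l-\tilde u_l$ transformed wave speeds ($\tilde u = x_\tau$ the mesh velocity; $u_v,u_l>0$). At the interface the mass flow rate gives $(u_l)_\delta=\gamma (u_v)_\delta+(1-\gamma)\tilde u_\delta$ with $\gamma=\rho_v/\rho_l$, the interface velocity is $\rho_v h_{lv}\tilde u_\delta=[k_l J_l^{-1}T_{l,\eta}-k_v J_v^{-1}T_{v,\xi}]_\delta$, and hence $(a_v)_\delta=(u_v)_\delta-\tilde u_\delta$, $(a_l)_\delta=\gamma (a_v)_\delta$. Weak imposition of the interface conditions: $\beta_v((J_v T_v)_\tau + (a_v T_v)_\xi) = k_v (J_v^{-1} T_{v,\xi})_\xi + L_\delta(\sigma_v^1(T_v-T_\delta)+\sigma_v^2(T_v-T_l)+\sigma_v^3(\partial/\partial\xi)^T(T_v-T_\delta))$, $\beta_l((J_l T_l)_\tau + (a_l T_l)_\eta)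 = k_l (J_l^{-1} T_{l,\eta})_\eta + L_\delta(\sigma_l^1(T_l-T_\delta)+\sigma_l^2(T_l-T_v)+\sigma_l^3(\partial/\partial\eta)^T(T_l-T_\delta))$, where $L_\delta$ is a lifting operator with $\int \psi L_\delta(\phi)\,dx=(\psi\phi)_\delta$, and the transposed derivative satisfies $\phi(\partial/\partial x)^T=\phi_x$. *)

From Stdlib Require Import Reals Lra.
Open Scope R_scope.

(* Multiplying the vapour equation by T_v, integrating over [xi_0, delta],
   multiplying the liquid equation by T_l, integrating over [delta, eta_n]
   and adding, the terms evaluated at the interface delta are
   (vapour domain: delta is its right end; liquid domain: its left end)
     - beta_v (a_v)_d T_v^2 / 2 + k_v J_v^{-1} T_v T_{v,xi}
     + sigma_v^1 T_v (T_v - T_d) + sigma_v^2 T_v (T_v - T_l)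
     + sigma_v^3 T_{v,xi} (T_v - T_d)
     + beta_l (a_l)_d T_l^2 / 2 - k_l J_l^{-1} T_l T_{l,eta}
     + sigma_l^1 T_l (T_l - T_d) + sigma_l^2 T_l (T_l - T_v)
     + sigma_l^3 T_{l,eta} (T_l - T_d).
   (The SAT terms come from  int psi L_delta(phi) = (psi phi)_delta  and
    phi (d/dx)^T = phi_x.)  All quantities are interface (delta) values. *)
Definition interface_rate
  (bv bl kv kl Jv Jl av al Td : R)
  (s1v s2v s3v s1l s2l s3l : R)
  (Tv Tl dTv dTl : R) : R :=
    - bv * av * Tv ^ 2 / 2 + kv / Jv * Tv * dTv
    + s1v * Tv * (Tv - Td) + s2v * Tv * (Tv - Tl) + s3v * dTv * (Tv - Td)
    + bl * al * Tl ^ 2 / 2 - kl / Jl * Tl * dTl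
    + s1l * Tl * (Tl - Td) + s2l * Tl * (Tl - Tv) + s3l * dTl * (Tl - Td).

Definition penalty_choice (bv bl kv kl Jv Jl av al sigma : R)
  (s1v s2v s3v s1l s2l s3l : R) : Prop :=
  (av < 0 -> s1v = bv * av /\ s1l = 0) /\
  (av > 0 -> s1v = 0 /\ s1l = - (bl * al)) /\
  (av = 0 -> s1v = 0 /\ s1l = 0) /\
  s2v = - sigma / 2 /\ s2l = - sigma / 2 /\
  s3v = - (kv / Jv) /\ s3l = kl / Jl.

From Stdlib Require Import Reals Lra Psatz.
Open Scope R_scope.

(* With sigma^3 = -+ k/J the diffusive penalties cancel the unknown normal
   derivatives except for Td times the heat-flux jump, which the interface
   velocity condition turns into the data term -Td rho_v h_lv u~.  The two
   coupling penalties add up to -sigma/2 (Tv - Tl)^2 <= 0.  Finally, on the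
   inflow side (vapour if a_v < 0, liquid if a_v > 0) the sigma^1 penalty
   completes the advective term to a square; what remains is
   beta |a| Td^2 / 2 plus terms that are nonpositive because a_l = gamma a_v
   has the sign of a_v. *)

Definition advective_rate (bv bl av al Td s1v s1l Tv Tl : R) : R :=
  - bv * av * Tv ^ 2 / 2 + bl * al * Tl ^ 2 / 2
  + s1v * Tv * (Tv - Td) + s1l * Tl * (Tl - Td).

Lemma interface_rate_split (bv bl kv kl Jv Jl av al Td sigma s1v s1l
    Tv Tl dTv dTl : R) :
  interface_rate bv bl kv kl Jv Jl av al Td
    s1v (- sigma / 2) (- (kv / Jv)) s1l (- sigma / 2) (kl / Jl) Tv Tl dTv dTl
  = advective_rate bv bl av al Td s1v s1l Tv Tl
    - sigma / 2 * (Tv - Tl) ^ 2 + Td * (kv / Jv * dTv - kl / Jl * dTl).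
Proof. unfold interface_rate, advective_rate, Rdiv; ring. Qed.

Lemma advective_rate_vapour_inflow (bv bl av al Td Tv Tl : R) :
  0 <= bv -> av < 0 -> 0 <= bl -> al <= 0 ->
  advective_rate bv bl av al Td (bv * av) 0 Tv Tl <= - (bv * av * Td ^ 2 / 2).
Proof.
  intros Hbv Hav Hbl Hal.
  assert (Hv : 0 <= bv * - av * (Tv - Td) ^ 2).
  { apply Rmult_le_pos; [nra | apply pow2_ge_0]. }
  assert (Hl : 0 <= bl * - al * Tl ^ 2).
  { apply Rmult_le_pos; [nra | apply pow2_ge_0]. }
  unfold advective_rate; nra.
Qed.

Lemma advective_rate_liquid_inflow (bv bl av al Td Tv Tl : R) :
  0 <= bv -> 0 <= av -> 0 <= bl -> 0 <= al ->
  advective_rate bv bl av al Td 0 (- (bl * al)) Tv Tl <= bl * al * Td ^ 2 / 2.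
Proof.
  intros Hbv Hav Hbl Hal.
  assert (Hv : 0 <= bv * av * Tv ^ 2).
  { apply Rmult_le_pos; [nra | apply pow2_ge_0]. }
  assert (Hl : 0 <= bl * al * (Tl - Td) ^ 2).
  { apply Rmult_le_pos; [nra | apply pow2_ge_0]. }
  unfold advective_rate; nra.
Qed.

Lemma advective_rate_bounded (bv bl g av Td s1v s1l : R) :
  0 <= bv -> 0 <= bl -> 0 <= g ->
  (av < 0 -> s1v = bv * av /\ s1l = 0) ->
  (av > 0 -> s1v = 0 /\ s1l = - (bl * (g * av))) ->
  (av = 0 -> s1v = 0 /\ s1l = 0) ->
  exists C : R, forall Tv Tl : R,
    advective_rate bv bl av (g * av) Td s1v s1l Tv Tl <= C.
Proof.
  intros Hbv Hbl Hg Hneg Hpos Hzero.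
  destruct (Rtotal_order av 0) as [Hav | [Hav | Hav]].
  - destruct (Hneg Hav) as [-> ->].
    exists (- (bv * av * Td ^ 2 / 2)); intros Tv Tl.
    apply advective_rate_vapour_inflow; nra.
  - destruct (Hzero Hav) as [-> ->]; subst av.
    exists 0; intros Tv Tl; unfold advective_rate; lra.
  - destruct (Hpos Hav) as [-> ->].
    exists (bl * (g * av) * Td ^ 2 / 2); intros Tv Tl.
    apply advective_rate_liquid_inflow; nra.
Qed.

Theorem proposition2
  (rv rl cpv cpl kv kl Jv Jl uv ut hlv Td sigma : R)
  (s1v s2v s3v s1l s2l s3l : R) :
  0 < rv -> 0 < rl -> 0 < cpv -> 0 < cpl -> 0 < kv -> 0 < kl ->
  0 < Jv -> 0 < Jl -> 0 < uv -> 0 <= sigma ->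
  penalty_choice (rv * cpv) (rl * cpl) kv kl Jv Jl (uv - ut)
    (rv / rl * (uv - ut)) sigma s1v s2v s3v s1l s2l s3l ->
  exists B : R, forall Tv Tl dTv dTl : R,
    rv * hlv * ut = kl / Jl * dTl - kv / Jv * dTv ->
    interface_rate (rv * cpv) (rl * cpl) kv kl Jv Jl (uv - ut)
      (rv / rl * (uv - ut)) Td s1v s2v s3v s1l s2l s3l Tv Tl dTv dTl <= B.
Proof.
  intros Hrv Hrl Hcv Hcl _ _ _ _ _ Hsigma
    [Hneg [Hpos [Hzero [-> [-> [-> ->]]]]]].
  assert (Hbv : 0 <= rv * cpv) by nra.
  assert (Hbl : 0 <= rl * cpl) by nra.
  assert (Hg : 0 <= rv / rl) by (apply Rlt_le, Rdiv_lt_0_compat; assumption).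
  destruct (advective_rate_bounded _ _ _ _ Td _ _ Hbv Hbl Hg Hneg Hpos Hzero)
    as [C HC].
  exists (C - Td * (rv * hlv * ut)); intros Tv Tl dTv dTl Hflux.
  rewrite interface_rate_split.
  replace (kv / Jv * dTv - kl / Jl * dTl) with (- (rv * hlv * ut)) by lra.
  assert (Hcoupling : 0 <= sigma / 2 * (Tv - Tl) ^ 2).
  { apply Rmult_le_pos; [lra | apply pow2_ge_0]. }
  specialize (HC Tv Tl); lra.
Qed.
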